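(* There exist an objective $f:\mathbb{R}^d\to\mathbb{R}$ satisfying Assumptions 1 and 2, a stochastic gradient oracle $(F,\mathcal{D})$ for $f$ satisfying Assumption 3, an initial point $x^{(0)}\in\mathbb{R}^d$ and a constant $\epsilon_0>0$ such that the following holds: for GaLore with an arbitrary subspace optimizer (as defined in the context), any ranks $r_\ell<\min\{m_\ell,n_\ell\}$, any subspace changing period $\tau\ge 1$, any choice of the maps $\rho_\ell^{(t)}$ (with arbitrary hyperparameters), and every realization of the samples, the iterates satisfy $\|\nabla f(x^{(t)})\|_2^2\ge\epsilon_0$ for all $t\ge 0$.
   Context: Parameters: $x=(\mathrm{vec}(X_1)^\top,\dots,\mathrm{vec}(X_{N_L})^\top)^\top\in\mathbb{R}^d$ with $X_\ell\in\mathbb{R}^{m_\ell\times n_\ell}$, $d=\sum_\ell m_\ell n_\ell$; $f(x)=\mathbb{E}_{\xi\sim\mathcal{D}}F(x;\xi)$ and $\nabla_\ell$ denotes the gradient with respect to $X_\ell$. Assumption 1: $\inf_x f(x)>-\infty$. Assumption 2: $\|\nabla f(x)-\nabla f(y)\|_2\le L\|x-y\|_2$ for all $x,y$. Assumption 3: for all $x$ and $\ell$, $\mathbb{E}_{\xi\sim\mathcal{D}}[\nabla_\ell F(x;\xi)]=\nabla_\ell f(x)$ and $\mathbb{E}_{\xi\sim\mathcal D}\|\nabla_\ell F(x;\xi)-\nabla_\ell f(x)\|_F^2\le\sigma_\ell^2$. GaLore with an arbitrary subspace optimizer: at each iteration $t=0,1,\dots$ draw $\xi^{(t)}\sim\mathcal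 D$ (independently) and set $G_\ell^{(t)}=\nabla_\ell F(x^{(t)};\xi^{(t)})$. If $t\equiv 0\pmod\tau$, compute an SVD $G_\ell^{(t)}=U\Sigma V^\top$ (singular values in nonincreasing order) and set $P_\ell^{(t)}=U[:,:r_\ell]$, $Q_\ell^{(t)}=V[:,:r_\ell]$ (first $r_\ell$ columns); otherwise $P_\ell^{(t)}=P_\ell^{(t-1)}$, $Q_\ell^{(t)}=Q_\ell^{(t-1)}$. Update $X_\ell^{(t+1)}=X_\ell^{(t)}+P_\ell^{(t)}\rho_\ell^{(t)}((P_\ell^{(t)})^\top G_\ell^{(t)})$ if $m_\ell\le n_\ell$, and $X_\ell^{(t+1)}=X_\ell^{(t)}+\rho_\ell^{(t)}(G_\ell^{(t)}Q_\ell^{(t)})(Q_\ell^{(t)})^\top$ if $m_\ell>n_\ell$, where $\rho_\ell^{(t)}$ is an arbitrary (possibly stateful, history-dependent) map sending matrices to matrices of the same size (e.g. Adam, momentum SGD). *)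

From HB Require Import structures.
From mathcomp Require Import all_boot all_order all_algebra.
From mathcomp Require Import all_classical all_reals all_analysis.
Set Implicit Arguments. Unset Strict Implicit. Unset Printing Implicit Defensive.
Import Order.TTheory GRing.Theory Num.Theory.
Local Open Scope ring_scope.

Section GaLoreDefs.
Context (R : realType) (N : nat) (m n : 'I_N -> nat).

Definition param := forall l : 'I_N, 'M[R]_(m l, n l).

Definition padd (x y : param) : param := fun l => x l + y l.
Definition psub (x y : param) : param := fun l => x l - y l.

Definition frob2 (p q : nat) (A : 'M[R]_(p, q)) : R :=
  \sum_(i < p) \sum_(j < q) A i j ^+ 2.

(* Euclidean inner product / norm on R^d = concatenation of vec(X_l) *)
Definition pdot (x y : param) : R :=
  \sum_(l < N) \sum_(i < m l) \sum_(j < n l) x l i j * y l i j.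
Definition pnorm2 (x : param) : R := \sum_(l < N) frob2 (x l).
Definition pnorm (x : param) : R := Num.sqrt (pnorm2 x).

Definition is_gradient (f : param -> R) (g : param -> param) : Prop :=
  forall x (e : R), 0 < e -> exists2 delta : R, 0 < delta &
    forall h, pnorm h < delta ->
      `| f (padd x h) - f x - pdot (g x) h | <= e * pnorm h.

Definition assumption1 (f : param -> R) : Prop := exists c : R, forall x, c <= f x.

Definition assumption2 (g : param -> param) : Prop :=
  exists L : R, forall x y, pnorm (psub (g x) (g y)) <= L * pnorm (psub x y).

Definition oracle (d : measure_display) (Xi : measurableType d)
  (D : probability Xi R) (f : param -> R) (F : param -> Xi -> R)
  (gF : param -> Xi -> param) (g : param -> param) : Prop :=
  [/\ is_gradient f g,
      (forall xi, is_gradient (fun x => F x xi) (fun x => gF x xi)) &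
      (forall x, (D.-integrable setT (fun xi => (F x xi)%:E) /\
                 (f x)%:E = (\int[D]_xi (F x xi)%:E)%E))].

Definition assumption3 (d : measure_display) (Xi : measurableType d)
  (D : probability Xi R) (gF : param -> Xi -> param) (g : param -> param) : Prop :=
  (forall x l i j, D.-integrable setT (fun xi => (gF x xi l i j)%:E) /\
     (\int[D]_xi (gF x xi l i j)%:E)%E = (g x l i j)%:E) /\
  exists sigma : 'I_N -> R, forall x l,
    (\int[D]_xi (frob2 (gF x xi l - g x l))%:E <= (sigma l ^+ 2)%:E)%E.

Definition is_svd (p q : nat) (G : 'M[R]_(p, q)) (U : 'M[R]_p)
  (S : 'M[R]_(p, q)) (V : 'M[R]_q) : Prop :=
  [/\ U^T *m U = 1%:M, V^T *m V = 1%:M, G = U *m S *m V^T &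
    [/\ (forall (i : 'I_p) (j : 'I_q), val i <> val j -> S i j = 0),
      (forall (i : 'I_p) (j : 'I_q), val i = val j -> 0 <= S i j) &
      (forall (i i' : 'I_p) (j j' : 'I_q), val i = val j -> val i' = val j' ->
         (val i <= val i')%N -> S i' j' <= S i j)]].

Definition galore_proj (p q r : nat) (G : 'M[R]_(p, q))
  (P : 'M[R]_(p, r)) (Q : 'M[R]_(q, r)) : Prop :=
  exists U S V, is_svd G U S V /\
    (forall (i : 'I_p) (k : 'I_r) (k' : 'I_p), val k = val k' -> P i k = U i k') /\
    (forall (j : 'I_q) (k : 'I_r) (k' : 'I_q), val k = val k' -> Q j k = V j k').

Definition galore_run (Xi : Type) (gF : param -> Xi -> param)
  (r : 'I_N -> nat) (tau : nat) (xi : nat -> Xi) (x0 : param)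
  (x : nat -> param)
  (P : forall (t : nat) (l : 'I_N), 'M[R]_(m l, r l))
  (Q : forall (t : nat) (l : 'I_N), 'M[R]_(n l, r l))
  (rhoL : forall (t : nat) (l : 'I_N), 'M[R]_(r l, n l) -> 'M[R]_(r l, n l))
  (rhoR : forall (t : nat) (l : 'I_N), 'M[R]_(m l, r l) -> 'M[R]_(m l, r l))
  : Prop :=
  [/\ x 0%N = x0,
      (forall (t : nat) l, (t %% tau = 0)%N ->
         galore_proj (gF (x t) (xi t) l) (P t l) (Q t l)),
      (forall (t : nat) l, (t %% tau <> 0)%N ->
         P t l = P t.-1 l /\ Q t l = Q t.-1 l) &
      (forall (t : nat) l, x t.+1 l =
         if (m l <= n l)%N
         then x t l + P t l *m rhoL t l ((P t l)^T *m gF (x t) (xi t) l)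
         else x t l + rhoR t l (gF (x t) (xi t) l *m Q t l) *m (Q t l)^T)].

End GaLoreDefs.

Arguments galore_run [R N m n Xi] gF r tau xi x0 x P Q rhoL rhoR.

(* The hard instance lives on the (0,0) entry of the first layer: f(x) = x_00^2 / 2,
   and the oracle adds a fair random sign times 2 along the rest of that layer's
   diagonal, so at any point with x_00 = 1 the first layer of every stochastic
   gradient is diag(1, +-2, ..., +-2). Sorting singular values decreasingly, the
   first coordinate can only enter the last singular vector, which GaLore drops
   since r < min(m, n); hence every projected update leaves x_00 = 1 untouched,
   while the true gradient keeps squared norm x_00^2 = 1. *)

From HB Require Import structures.
From mathcomp Require Import all_boot all_order all_algebra.
From mathcomp Require Import all_classical all_reals all_analysis.
From mathcomp Require Import measurable_realfun ring lra zify.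
Import Order.TTheory GRing.Theory Num.Theory.
Set Implicit Arguments. Unset Strict Implicit. Unset Printing Implicit Defensive.
Local Open Scope ring_scope.

Section OrthonormalEigenbasis.
Variable R : realFieldType.

(* Columns with eigenvalue below [b] are supported on row [i0]. If column [k]
   meets that row its eigenvalue is [a], so the last column also has eigenvalue
   below [b], and two orthonormal columns cannot share a one-row support. *)
Lemma orthonormal_eigenbasis_row_eq0 q (W : 'M[R]_q) (e lam : 'I_q -> R)
    (a b : R) (i0 k : 'I_q) :
  W^T *m W = 1%:M -> a < b -> e i0 = a -> (forall i, i != i0 -> e i = b) ->
  (forall k1 k2 : 'I_q, (k1 <= k2)%N -> lam k2 <= lam k1) ->
  (forall i k, e i * W i k = W i k * lam k) ->
  (k < q.-1)%N -> W i0 k = 0.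
Proof.
move=> WtW ab e_i0 e_b lam_dec eigW kq.
have q_gt0 : (0 < q)%N by apply: leq_ltn_trans (ltn_ord k).
have qp : (q.-1 < q)%N by rewrite ltn_predL.
pose j := Ordinal qp.
have kj : k != j by rewrite -val_eqE /= ltn_eqF.
have col_supp k' : lam k' < b -> forall i, i != i0 -> W i k' = 0.
  move=> lb i /e_b ei; have := eigW i k'; rewrite ei => eq_bW.
  have : (b - lam k') * W i k' = 0 by rewrite mulrBl eq_bW mulrC subrr.
  by move/eqP; rewrite mulf_eq0 subr_eq0 gt_eqF //= => /eqP.
have dotE k1 k2 : lam k1 < b -> lam k2 < b ->
    (W^T *m W) k1 k2 = W i0 k1 * W i0 k2.
  move=> l1 l2; rewrite mxE (bigD1 i0) //= big1 ?addr0 ?mxE // => i ni.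
  by rewrite mxE col_supp ?mul0r.
apply/eqP; apply: contraT => Wk_neq0.
have lam_k : lam k = a.
  by apply: (mulfI Wk_neq0); rewrite -eigW e_i0 mulrC.
have lam_j : lam j < b.
  by apply: (le_lt_trans _ ab); rewrite -lam_k; apply: lam_dec; exact: ltnW.
have Wj_eq0 : W i0 j = 0.
  have := dotE k j; rewrite lam_k => /(_ ab lam_j).
  rewrite WtW mxE (negbTE kj) => /esym/eqP.
  by rewrite mulf_eq0 (negbTE Wk_neq0) => /eqP.
by move: (dotE j j lam_j lam_j); rewrite WtW mxE eqxx Wj_eq0 mulr0 => /eqP; rewrite oner_eq0.
Qed.

End OrthonormalEigenbasis.

Section RectangularDiagonal.
Variable R : numDomainType.

Lemma mul_tr_diag_mx p q (A : 'M[R]_(p, q)) : is_diag_mx A ->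
  A *m A^T = diag_mx (\row_i \sum_j A i j ^+ 2).
Proof.
move=> /is_diag_mxP Adiag; apply/matrixP => i i'; rewrite !mxE.
have [<-|ne] := eqVneq i i'; first by apply: eq_bigr => j _; rewrite mxE expr2.
rewrite mulr0n; apply: big1 => j _; rewrite mxE.
have [e1|n1] := eqVneq (val i) (val j); last by rewrite Adiag ?mul0r.
have [e2|n2] := eqVneq (val i') (val j); last by rewrite (Adiag i' j) ?mulr0.
by move: ne; rewrite -val_eqE e1 e2 eqxx.
Qed.

Lemma diag_row_sqr p q (A : 'M[R]_(p, q)) (i : 'I_p) (j : 'I_q) :
  is_diag_mx A -> val i = val j -> \sum_j' A i j' ^+ 2 = A i j ^+ 2.
Proof.
move=> /is_diag_mxP Adiag eij; rewrite (bigD1 j) //= big1 ?addr0 // => j' ne.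
by rewrite Adiag ?expr0n // eij; rewrite val_eqE eq_sym.
Qed.

End RectangularDiagonal.

Section DiagonalSVD.
Variable R : realType.

Lemma is_svd_trmx p q (G : 'M[R]_(p, q)) U S V :
  is_svd G U S V -> is_svd G^T V S^T U.
Proof.
move=> [UtU VtV -> [Soff Snn Sdec]]; split => //.
- by rewrite !trmx_mul trmxK mulmxA.
- split=> [i j ne|i j e|i i' j j' e e' le]; rewrite !mxE.
  + by apply: Soff => e; apply: ne.
  + exact: Snn.
  + by apply: Sdec; rewrite // -e -e'.
Qed.

Lemma is_svd_gram p q (G : 'M[R]_(p, q)) U S V :
  is_svd G U S V -> G *m G^T *m U = U *m (S *m S^T).
Proof.
move=> [UtU VtV -> _]; rewrite !trmx_mul !trmxK -!mulmxA.
by rewrite UtU mulmx1 (mulmxA V^T) VtV mul1mx.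
Qed.

Definition diag1c p q (c : R) : 'M[R]_(p, q) :=
  \matrix_(i, j) (if val i == val j then (if val i == 0%N then 1 else c) else 0).

Lemma diag1c_is_diag p q c : is_diag_mx (diag1c p q c).
Proof. by apply/is_diag_mxP => i j /negbTE ne; rewrite mxE ne. Qed.

Lemma tr_diag1c p q c : (diag1c p q c)^T = diag1c q p c.
Proof. by apply/matrixP => i j; rewrite !mxE eq_sym; case: eqP => // ->. Qed.

Lemma svd_diag1c_row0 p q c U S V (i0 k : 'I_p) :
  1 < c ^+ 2 -> (p <= q)%N -> is_svd (diag1c p q c) U S V -> val i0 = 0%N ->
  (k < p.-1)%N -> U i0 k = 0.
Proof.
move=> c2 pq svdG i0_eq0 kp; have [UtU _ _ [Soff Snn Sdec]] := svdG.
have Sdiag : is_diag_mx S by apply/is_diag_mxP => i j /eqP; exact: Soff.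
have ltq (i : 'I_p) : (i < q)%N by exact: leq_trans (ltn_ord i) pq.
have rowG (i : 'I_p) :
    \sum_j diag1c p q c i j ^+ 2 = (if val i == 0%N then 1 else c) ^+ 2.
  by rewrite (@diag_row_sqr _ _ _ _ i (Ordinal (ltq i))) ?diag1c_is_diag // mxE /= eqxx.
have rowS (i : 'I_p) : \sum_j S i j ^+ 2 = S i (Ordinal (ltq i)) ^+ 2.
  exact: diag_row_sqr.
apply: (@orthonormal_eigenbasis_row_eq0 _ _ _
  (fun i => \sum_j diag1c p q c i j ^+ 2) (fun k => \sum_j S k j ^+ 2) 1 (c ^+ 2)) => //.
- by rewrite rowG i0_eq0 expr1n.
- move=> i ni; rewrite rowG ifN //.
  by apply: contra ni => /eqP i_eq0; apply/eqP/val_inj; rewrite /= i_eq0.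
- move=> k1 k2 le12; rewrite !rowS.
  have := Sdec k1 k2 (Ordinal (ltq k1)) (Ordinal (ltq k2)) erefl erefl le12.
  have := Snn k2 (Ordinal (ltq k2)) erefl; nra.
- move=> i k'; have := congr1 (fun M : 'M[R]_p => M i k') (is_svd_gram svdG).
  by rewrite !mul_tr_diag_mx ?diag1c_is_diag // mul_diag_mx mul_mx_diag !mxE.
Qed.

Lemma galore_proj_trmx p q r (G : 'M[R]_(p, q)) (P : 'M[R]_(p, r)) Q :
  galore_proj G P Q -> galore_proj G^T Q P.
Proof.
move=> [U [S [V [svdG [HP HQ]]]]].
by exists V, S^T, U; split; [exact: is_svd_trmx | split].
Qed.

Lemma galore_proj_diag1c_row0 p q r c (P : 'M[R]_(p, r)) (Q : 'M[R]_(q, r))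
    (i : 'I_p) (k : 'I_r) :
  1 < c ^+ 2 -> (p <= q)%N -> (r < p)%N -> galore_proj (diag1c p q c) P Q ->
  val i = 0%N -> P i k = 0.
Proof.
move=> c2 pq rp [U [S [V [svdG [HP _]]]]] i_eq0.
have kp : (k < p)%N by rewrite (ltn_trans (ltn_ord k)).
rewrite (HP i k (Ordinal kp)) //; apply: svd_diag1c_row0 c2 pq svdG i_eq0 _ => /=.
by rewrite -ltnS prednK ?(leq_ltn_trans _ rp).
Qed.

End DiagonalSVD.

Section FairCoin.
Variable R : realType.

Definition fair_coin : probability bool R := bernoulli_prob (2^-1 : R).

Lemma half_itv01 : (0 : R) <= (2 : R)^-1 <= 1.
Proof. by apply/andP; split; [rewrite invr_ge0 | rewrite invf_le1 ?ler1n]. Qed.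

Lemma integral_fair_coin (h : bool -> R) :
  (\int[fair_coin]_b (h b)%:E = ((h true + h false) / 2)%:E)%E.
Proof.
rewrite integralE !integral_bernoulli_prob ?half_itv01 //.
rewrite !funeposE !funenegE /= -!EFin_max -!EFinM -!EFinD; congr EFin.
have max_parts (a : R) : Num.max a 0 - Num.max (- a) 0 = a.
  by rewrite !maxEle; do 2 case: ifP; lra.
rewrite -[in RHS](max_parts (h true)) -[in RHS](max_parts (h false)) /unstable.onem.
have -> : (1 - 2^-1 : R) = 2^-1 by rewrite {1}(splitr 1) mul1r addrK.
lra.
Qed.

Lemma integrable_fair_coin (h : bool -> R) :
  fair_coin.-integrable setT (fun b => (h b)%:E).
Proof.
apply/integrableP; split; first by apply/measurable_EFinP => _ Y _.
by rewrite integral_bernoulli_prob ?half_itv01 // -!EFinM -EFinD ltry.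
Qed.

End FairCoin.

Section ParamGeometry.
Variables (R : realType) (N : nat) (m n : 'I_N -> nat).
Implicit Types x y h : param R m n.

Lemma pdotDl x y h : pdot (fun l => x l + y l) h = pdot x h + pdot y h.
Proof.
rewrite /pdot -big_split; apply: eq_bigr => l _; rewrite -big_split.
by apply: eq_bigr => i _; rewrite -big_split; apply: eq_bigr => j _; rewrite mxE mulrDl.
Qed.

Lemma pdotDr x y h : pdot h (padd x y) = pdot h x + pdot h y.
Proof.
rewrite /pdot -big_split; apply: eq_bigr => l _; rewrite -big_split.
by apply: eq_bigr => i _; rewrite -big_split; apply: eq_bigr => j _; rewrite mxE mulrDr.
Qed.

Lemma pdotZl (a : R) x h : pdot (fun l => a *: x l) h = a * pdot x h.
Proof.
rewrite /pdot mulr_sumr; apply: eq_bigr => l _; rewrite mulr_sumr.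
by apply: eq_bigr => i _; rewrite mulr_sumr; apply: eq_bigr => j _; rewrite mxE mulrA.
Qed.

Lemma pnorm2E x : pnorm2 x = pdot x x.
Proof.
by apply: eq_bigr => l _; apply: eq_bigr => i _; apply: eq_bigr => j _; rewrite expr2.
Qed.

Lemma ler_term_sum (I : finType) (F : I -> R) (k : I) :
  (forall i, 0 <= F i) -> F k <= \sum_i F i.
Proof. by move=> F_ge0; rewrite (bigD1 k) //= lerDl sumr_ge0. Qed.

Lemma frob2_ge0 p q (A : 'M[R]_(p, q)) : 0 <= frob2 A.
Proof. by apply: sumr_ge0 => i _; apply: sumr_ge0 => j _; exact: sqr_ge0. Qed.

Lemma ler_norm_entry_pnorm h l i j : `|h l i j| <= pnorm h.
Proof.
rewrite /pnorm -sqrtr_sqr ler_sqrt; last by apply: sumr_ge0 => l' _; exact: frob2_ge0.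
have row_ge0 i' : 0 <= \sum_j' h l i' j' ^+ 2.
  by apply: sumr_ge0 => j' _; exact: sqr_ge0.
have le_row : h l i j ^+ 2 <= \sum_j' h l i j' ^+ 2.
  by apply: (@ler_term_sum _ (fun j' => h l i j' ^+ 2) j) => j'; exact: sqr_ge0.
have le_layer : \sum_j' h l i j' ^+ 2 <= frob2 (h l).
  exact: (@ler_term_sum _ (fun i' => \sum_j' h l i' j' ^+ 2) i row_ge0).
have le_all : frob2 (h l) <= pnorm2 h.
  by apply: (@ler_term_sum _ (fun l' => frob2 (h l')) l) => l'; exact: frob2_ge0.
exact: le_trans le_row (le_trans le_layer le_all).
Qed.

(* The remainder is [h_lij^2 / 2 <= pnorm h ^ 2 / 2], so [delta = 2 e] works. *)
Lemma is_gradient_half_sqr_entry l i j (c : R) (K : param R m n) f g :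
  (forall x, f x = x l i j ^+ 2 / 2 + c * pdot K x) ->
  (forall x h, pdot (g x) h = x l i j * h l i j + c * pdot K h) ->
  is_gradient f g.
Proof.
move=> fE gE x e e_gt0; exists (2 * e); first by rewrite mulr_gt0.
move=> h h_small; rewrite !fE gE pdotDr /padd mxE.
set a := x l i j; set b := h l i j.
have -> : (a + b) ^+ 2 / 2 + c * (pdot K x + pdot K h) - (a ^+ 2 / 2 + c * pdot K x)
    - (a * b + c * pdot K h) = `|b| ^+ 2 / 2.
  by rewrite real_normK ?num_real; field.
have := ler_norm_entry_pnorm h i j; rewrite -/b => b_le.
have b_ge0 : 0 <= `|b| by [].
have p_ge0 : 0 <= pnorm h by exact: sqrtr_ge0.
rewrite ger0_norm ?divr_ge0 ?sqr_ge0 //; nra.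
Qed.

End ParamGeometry.

Section HardInstance.
Variables (R : realType) (N : nat) (m n : 'I_N -> nat) (l0 : 'I_N).
Variables (i0 : 'I_(m l0)) (j0 : 'I_(n l0)).
Hypotheses (i0_eq0 : val i0 = 0%N) (j0_eq0 : val j0 = 0%N).
Implicit Types (x y h : param R m n) (b : bool).

Definition coord x : R := x l0 i0 j0.

Definition unit00 : param R m n := fun l => \matrix_(i, j)
  (if (l == l0) && (val i == 0%N) && (val j == 0%N) then 1 else 0).

Definition diag_tail : param R m n := fun l => \matrix_(i, j)
  (if (l == l0) && (val i == val j) && (val i != 0%N) then 1 else 0).

Definition coin_sign b : R := if b then 2 else -2.

Definition hard_f x : R := coord x ^+ 2 / 2.
Definition hard_grad x : param R m n := fun l => coord x *: unit00 l.
Definition hard_F x b : R := hard_f x + coin_sign b * pdot diag_tail x.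
Definition hard_gradF x b : param R m n :=
  fun l => hard_grad x l + coin_sign b *: diag_tail l.

Lemma coord_unit00 : coord unit00 = 1.
Proof. by rewrite /coord mxE eqxx i0_eq0 j0_eq0. Qed.

Lemma pdot_unit00 h : pdot unit00 h = coord h.
Proof.
have i_eq0 (i : 'I_(m l0)) : (val i == 0%N) = (i == i0) by rewrite -i0_eq0.
have j_eq0 (j : 'I_(n l0)) : (val j == 0%N) = (j == j0) by rewrite -j0_eq0.
rewrite /pdot (bigD1 l0) //= [X in _ + X]big1 ?addr0; last first.
  by move=> l nl; apply: big1 => i _; apply: big1 => j _; rewrite mxE (negbTE nl) mul0r.
rewrite (bigD1 i0) //= [X in _ + X]big1 ?addr0; last first.
  by move=> i ni; apply: big1 => j _; rewrite mxE eqxx i_eq0 (negbTE ni) mul0r.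
rewrite (bigD1 j0) //= [X in _ + X]big1 ?addr0; last first.
  by move=> j nj; rewrite mxE eqxx i_eq0 j_eq0 eqxx (negbTE nj) mul0r.
by rewrite mxE eqxx i_eq0 j_eq0 !eqxx mul1r.
Qed.

Lemma pnorm2_hard_grad x : pnorm2 (hard_grad x) = coord x ^+ 2.
Proof.
rewrite pnorm2E pdotZl pdot_unit00 expr2; congr (_ * _).
by rewrite /coord mxE -/(coord unit00) coord_unit00 mulr1.
Qed.

Lemma pdot_hard_gradF x b h :
  pdot (hard_gradF x b) h = coord x * coord h + coin_sign b * pdot diag_tail h.
Proof. by rewrite pdotDl !pdotZl pdot_unit00. Qed.

Lemma hard_f_gradient : is_gradient hard_f hard_grad.
Proof.
apply: (@is_gradient_half_sqr_entry _ _ _ _ l0 i0 j0 0 diag_tail) => [x|x h].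
  by rewrite /hard_f mul0r addr0.
by rewrite pdotZl pdot_unit00 mul0r addr0.
Qed.

Lemma hard_F_gradient b :
  is_gradient (fun x => hard_F x b) (fun x => hard_gradF x b).
Proof.
apply: (@is_gradient_half_sqr_entry _ _ _ _ l0 i0 j0 (coin_sign b) diag_tail).
  by [].
by move=> x h; rewrite pdot_hard_gradF.
Qed.

Lemma hard_grad_lipschitz : assumption2 hard_grad.
Proof.
exists 1 => x y; rewrite mul1r.
have -> : psub (hard_grad x) (hard_grad y) = hard_grad (psub x y).
  apply: functional_extensionality_dep => l.
  by rewrite /psub /hard_grad /coord /= -scalerBl !mxE.
rewrite /pnorm pnorm2_hard_grad sqrtr_sqr; exact: ler_norm_entry_pnorm.
Qed.

Lemma sqr_coin_sign b : coin_sign b ^+ 2 = 4.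
Proof. by case: b; rewrite /coin_sign; ring. Qed.

Lemma hard_gradF_layer x b : coord x = 1 ->
  hard_gradF x b l0 = diag1c (m l0) (n l0) (coin_sign b).
Proof.
move=> x1; apply/matrixP => i j; rewrite !mxE -/(coord x) x1 mul1r !eqxx /=.
have [eij|nij] := eqVneq (i : nat) j.
  by rewrite -eij andbb; case: (val i == 0%N); rewrite /= ?mulr1 ?mulr0 ?addr0 ?add0r.
rewrite /= mulr0 addr0; case: eqP => //= i_eq0.
by case: eqP => // j_eq0; rewrite i_eq0 j_eq0 eqxx in nij.
Qed.

Lemma frob2_hard_gradF_dev x b l :
  frob2 (hard_gradF x b l - hard_grad x l) = frob2 (2 *: diag_tail l).
Proof.
apply: eq_bigr => i _; apply: eq_bigr => j _.
by rewrite !mxE; case: b; rewrite /coin_sign; ring.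
Qed.

Definition avoids_coord p q (Pm : 'M[R]_(m l0, p)) (Qm : 'M[R]_(n l0, q)) :=
  ((m l0 <= n l0)%N -> forall k, Pm i0 k = 0) /\
  (~~ (m l0 <= n l0)%N -> forall k, Qm j0 k = 0).

Lemma galore_proj_hard_layer x b r (Pm : 'M[R]_(m l0, r)) (Qm : 'M[R]_(n l0, r)) :
  coord x = 1 -> (r < minn (m l0) (n l0))%N ->
  galore_proj (hard_gradF x b l0) Pm Qm -> avoids_coord Pm Qm.
Proof.
move=> x1 r_lt; rewrite hard_gradF_layer // => proj.
have c2 : 1 < coin_sign b ^+ 2 by rewrite sqr_coin_sign; lra.
split=> [le k | gt k].
  by apply: galore_proj_diag1c_row0 c2 le _ proj i0_eq0; lia.
have := galore_proj_trmx proj; rewrite tr_diag1c => projT.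
by apply: galore_proj_diag1c_row0 c2 _ _ projT j0_eq0; lia.
Qed.

Lemma coord_galore_update x r (Pm : 'M[R]_(m l0, r)) (Qm : 'M[R]_(n l0, r)) A B :
  avoids_coord Pm Qm ->
  (if (m l0 <= n l0)%N then x l0 + Pm *m A else x l0 + B *m Qm^T) i0 j0 = coord x.
Proof.
move=> [P0 Q0]; case: ifP => mn; rewrite !mxE big1 ?addr0 // => k _.
  by rewrite P0 ?mul0r.
by rewrite mxE Q0 ?mulr0 ?mn.
Qed.

Lemma galore_run_hard_coord r tau xi (x : nat -> param R m n) P Q rhoL rhoR :
  (r l0 < minn (m l0) (n l0))%N ->
  galore_run hard_gradF r tau xi unit00 x P Q rhoL rhoR ->
  forall t, coord (x t) = 1.
Proof.
move=> r_lt [x_0 proj_new proj_keep x_next].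
suff inv : forall t, coord (x t) = 1 /\ avoids_coord (P t l0) (Q t l0).
  by move=> t; case: (inv t).
have avoids_new t : coord (x t) = 1 -> (t %% tau = 0)%N ->
    avoids_coord (P t l0) (Q t l0).
  by move=> xt1 t0; apply: galore_proj_hard_layer xt1 r_lt (proj_new t l0 t0).
elim=> [|t [xt1 avoids_t]].
  have x01 : coord (x 0%N) = 1 by rewrite x_0 coord_unit00.
  by split=> //; apply: avoids_new; rewrite ?mod0n.
have xt1' : coord (x t.+1) = 1.
  by rewrite {1}/coord x_next coord_galore_update.
split=> //; have [t0|/eqP tn0] := eqVneq (t.+1 %% tau)%N 0%N; first exact: avoids_new.
by have [-> ->] := proj_keep t.+1 l0 tn0.
Qed.

End HardInstance.

Theorem theorem1 (R : realType) (N : nat) (m n : 'I_N -> nat) :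
  (0 < N)%N -> (forall l, 0 < m l)%N -> (forall l, 0 < n l)%N ->
  exists (f : param R m n -> R) (g : param R m n -> param R m n)
         (d : measure_display) (Xi : measurableType d) (D : probability Xi R)
         (F : param R m n -> Xi -> R) (gF : param R m n -> Xi -> param R m n)
         (x0 : param R m n) (eps0 : R),
    [/\ assumption1 f, assumption2 g, oracle D f F gF g,
        assumption3 D gF g & 0 < eps0] /\
    forall (r : 'I_N -> nat) (tau : nat) (xi : nat -> Xi)
           (x : nat -> param R m n)
           (P : forall (t : nat) (l : 'I_N), 'M[R]_(m l, r l))
           (Q : forall (t : nat) (l : 'I_N), 'M[R]_(n l, r l))
           (rhoL : forall (t : nat) (l : 'I_N), 'M[R]_(r l, n l) -> 'M[R]_(r l, n l))
           (rhoR : forall (t : nat) (l : 'I_N), 'M[R]_(m l, r l) -> 'M[R]_(m l, r l)),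
      (forall l, r l < minn (m l) (n l))%N -> (0 < tau)%N ->
      galore_run gF r tau xi x0 x P Q rhoL rhoR ->
      forall t : nat, eps0 <= pnorm2 (g (x t)).
Proof.
move=> N_gt0 m_gt0 n_gt0; pose l0 := Ordinal N_gt0.
pose i0 := Ordinal (m_gt0 l0); pose j0 := Ordinal (n_gt0 l0).
have i0_eq0 : val i0 = 0%N by []; have j0_eq0 : val j0 = 0%N by [].
exists (hard_f i0 j0), (hard_grad i0 j0), _, bool, (fair_coin R),
  (hard_F i0 j0), (hard_gradF i0 j0), (unit00 R m n l0), 1.
split; first split.
- by exists 0 => x; rewrite divr_ge0 ?sqr_ge0.
- exact: hard_grad_lipschitz.
- split; [exact: hard_f_gradient | exact: hard_F_gradient | move=> x].
  by split; [exact: integrable_fair_coin | rewrite integral_fair_coin /hard_F /coin_sign; congr EFin; lra].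
- split=> [x l i j|].
    split; first exact: integrable_fair_coin.
    by rewrite integral_fair_coin /hard_gradF !mxE /coin_sign; congr EFin; lra.
  exists (fun l => Num.sqrt (frob2 (2 *: diag_tail R m n l0 l))) => x l.
  by rewrite integral_fair_coin !frob2_hard_gradF_dev sqr_sqrtr ?frob2_ge0 // lee_fin; lra.
- exact: ltr01.
move=> r tau xi x P Q rhoL rhoR r_lt _ run t.
by rewrite (pnorm2_hard_grad i0_eq0 j0_eq0) (galore_run_hard_coord i0_eq0 j0_eq0 (r_lt l0) run) expr1n.
Qed.
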